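(* Let $(\mathcal{S},\mathcal{A},r,p)$ be a weakly communicating MDP, $T$ the horizon, $H\ge2$, $\delta\in(0,1)$, and let $(s_t,a_t)_{t=1}^T$ be the state-action sequence generated by Optimistic Q-learning (defined in the context) with parameters $H,\delta$. Let $V^*,Q^*$ be the optimal value and Q-functions of the discounted MDP with discount factor $\gamma=1-1/H$. Then with probability at least $1-\delta$, $$\sum_{t=1}^T\big(Q^*(s_t,a_t)-\gamma V^*(s_t)-r(s_t,a_t)\big)\le 2\,\mathrm{sp}(v^* )\sqrt{2T\ln\tfrac1\delta}+2\,\mathrm{sp}(v^* ).$$
   Context: The MDP has finite state/action sets, known reward $r:\mathcal{S}\times\mathcal{A}\to[0,1]$, unknown kernel $p$; weakly communicating means $\mathcal{S}$ splits into states transient under every stationary policy and a set in which any two states are mutually accessible under some stationary policy. There exist $J^*\in[0,1]$ and $q^*$ with $J^*+q^*(s,a)=r(s,a)+\mathbb{E}_{s'\sim p(\cdot|s,a)}[v^*(s')]$, $v^*(s)=\max_a q^*(s,a)$, and $\mathrm{sp}(v^* )=\max_s v^*(s)-\min_s v^*(s)$. Discounted: $Q^*(s,a)=r(s,a)+\gamma\mathbb{E}_{s'\sim p(\cdot|s,a)}[V^*(s')]$, $V^*(s)=\max_aQ^*(s,a)$. Optimistic Q-learning with parameters $H\ge2,\delta$: $\gamma=1-1/H$, $\hat V_1\equiv H$, $Q_1=\hat Q_1\equiv H$, $n_1\equiv0$, $\alpha_\tau=\frac{H+1}{H+\tau}$, $b_\tau=4\,\mathrm{sp}(v^* )\sqrt{\frac{H}{\tau}\ln\frac{2T}{\delta}}$.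 For $t=1,\dots,T$: from the current state $s_t$ (with $s_1$ arbitrary) take $a_t\in\arg\max_a\hat Q_t(s_t,a)$, observe $s_{t+1}\sim p(\cdot|s_t,a_t)$; set $n_{t+1}(s_t,a_t)=n_t(s_t,a_t)+1$, $\tau=n_{t+1}(s_t,a_t)$, $Q_{t+1}(s_t,a_t)=(1-\alpha_\tau)Q_t(s_t,a_t)+\alpha_\tau[r(s_t,a_t)+\gamma\hat V_t(s_{t+1})+b_\tau]$, $\hat Q_{t+1}(s_t,a_t)=\min\{\hat Q_t(s_t,a_t),Q_{t+1}(s_t,a_t)\}$, $\hat V_{t+1}(s_t)=\max_a\hat Q_{t+1}(s_t,a)$; all other entries unchanged. *)

From HB Require Import structures.
From mathcomp Require Import all_boot all_order all_algebra.
From mathcomp Require Import reals exp.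
Set Implicit Arguments. Unset Strict Implicit. Unset Printing Implicit Defensive.
Import Order.TTheory GRing.Theory Num.Theory.
Local Open Scope ring_scope.

Section MDP.
Variables (R : realType) (S A : finType).

Definition is_kernel (p : S -> A -> S -> R) :=
  forall s a, (forall s', 0 <= p s a s') /\ \sum_(s' : S) p s a s' = 1.

Definition is_policy (pi : S -> A -> R) :=
  forall s, (forall a, 0 <= pi s a) /\ \sum_(a : A) pi s a = 1.

Definition step_rel (p : S -> A -> S -> R) (pi : S -> A -> R) : rel S :=
  fun x y => [exists a, (0 < pi x a) && (0 < p x a y)].

Definition accessible p pi (x y : S) : bool := connect (step_rel p pi) x y.

(* transience of a state in a finite Markov chain: some state accessible
   from it does not lead back to it *)
Definition transient p pi (s : S) : Prop :=
  exists y, accessible p pi s y && ~~ accessible p pi y s.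

Definition weakly_communicating (p : S -> A -> S -> R) : Prop :=
  exists C : {set S},
    (forall s, s \notin C -> forall pi, is_policy pi -> transient p pi s) /\
    (forall s s', s \in C -> s' \in C ->
       exists pi, is_policy pi /\ accessible p pi s s' /\ accessible p pi s' s).

Definition is_max (q : S -> A -> R) (v : S -> R) : Prop :=
  forall s, (forall a, q s a <= v s) /\ (exists a, v s = q s a).

Definition avg_opt (r : S -> A -> R) (p : S -> A -> S -> R)
  (J : R) (q : S -> A -> R) (v : S -> R) : Prop :=
  is_max q v /\
  forall s a, J + q s a = r s a + \sum_(s' : S) p s a s' * v s'.

Definition disc_opt (r : S -> A -> R) (p : S -> A -> S -> R) (gamma : R)
  (Q : S -> A -> R) (V : S -> R) : Prop :=
  is_max Q V /\
  forall s a, Q s a = r s a + gamma * \sum_(s' : S) p s a s' * V s'.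

(* span: max_s v s - min_s v s  (= max over pairs of v s - v s') *)
Definition sp (v : S -> R) : R :=
  \big[Num.max/0]_(s : S) \big[Num.max/0]_(s' : S) (v s - v s').

Record qstate := QState {
  Qf : S -> A -> R;
  Qh : S -> A -> R;
  Vh : S -> R;
  cnt : S -> A -> nat;
  cur : S
}.

Variables (r : S -> A -> R) (p : S -> A -> S -> R).
Variables (H delta : R) (T : nat) (spv : R).
(* tie-breaking rule: sel f is some maximizer of f *)
Variable sel : (A -> R) -> A.

Definition gam : R := 1 - H^-1.
Definition alpha (tau : nat) : R := (H + 1) / (H + tau%:R).
Definition bonus (tau : nat) : R :=
  4 * spv * Num.sqrt (H / tau%:R * ln (2 * T%:R / delta)).

Definition act (st : qstate) : A := sel (Qh st (cur st)).

Definition upd {X : Type} (f : S -> A -> X) (s : S) (a : A) (x : X) :=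
  fun s0 a0 => if (s0 == s) && (a0 == a) then x else f s0 a0.

Definition qstep (st : qstate) (s' : S) : qstate :=
  let s := cur st in
  let a := act st in
  let tau := (cnt st s a).+1 in
  let qn := (1 - alpha tau) * Qf st s a
            + alpha tau * (r s a + gam * Vh st s' + bonus tau) in
  let qh' := upd (Qh st) s a (Num.min (Qh st s a) qn) in
  let vh' := fun s0 => if s0 == s then \big[Num.max/qh' s a]_(b : A) qh' s b
                       else Vh st s0 in
  QState (upd (Qf st) s a qn) qh' vh' (upd (cnt st) s a tau) s'.

Definition qinit (s1 : S) : qstate :=
  QState (fun _ _ => H) (fun _ _ => H) (fun _ => H) (fun _ _ => 0%N) s1.

Fixpoint qrun (st : qstate) (l : seq S) : qstate :=
  if l is x :: l' then qrun (qstep st x) l' else st.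

(* algorithm state at time i+1 (i = 0..T-1), given observed next states xs *)
Definition state_at (s1 : S) (xs : seq S) (i : nat) : qstate :=
  qrun (qinit s1) (take i xs).

(* probability of the realization xs = (s_2, ..., s_{T+1}) *)
Definition traj_prob (s1 : S) (xs : T.-tuple S) : R :=
  \prod_(i < T) (let st := state_at s1 xs i in p (cur st) (act st) (tnth xs i)).

End MDP.

Arguments traj_prob {R S A} r p H delta T spv sel s1 xs.
Arguments state_at {R S A} r H delta T spv sel s1 xs i.

From mathcomp Require Import all_boot all_order all_algebra.
From mathcomp Require Import reals exp sequences.
From mathcomp Require Import ring lra.
Import Order.TTheory GRing.Theory Num.Theory.
Local Open Scope ring_scope.
Set Implicit Arguments. Unset Strict Implicit. Unset Printing Implicit Defensive.

(* By the discounted Bellman equation, Q^*(s_t,a_t) - g V^*(s_t) - r(s_t,a_t) equals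
   g (E[V^*(s_(t+1)) | s_t, a_t] - V^*(s_t)).  Splitting off V^*(s_(t+1)) leaves g times a
   sum of martingale differences plus the telescoping term g (V^*(s_(T+1)) - V^*(s_1)).
   Comparing the discounted and average-reward optimality equations shows that V^*
   oscillates by at most twice the span of v^*; this bounds the telescoping term and the
   martingale increments, and the Azuma-Hoeffding inequality (Hoeffding's lemma with
   Popoviciu's variance bound, then a Chernoff bound along the trajectory) controls the
   martingale part outside an event of probability delta. *)

(* Square e^x = (e^(x/2))^2 and bound e^(x/2) <= 1 / (1 - x/2) using e^(-x/2) >= 1 - x/2. *)
Lemma expR_le_quad (R : realType) (x : R) : x <= 1 -> expR x <= 1 + x + 2 * x ^+ 2.
Proof.
move=> x1; set w := 1 - x / 2.
have w_gt0 : 0 < w by rewrite /w; lra.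
have exp_half : expR (x / 2) * w <= 1.
  have := expR_ge1Dx (- (x / 2)); have := expRxMexpNx_1 (x / 2).
  have := expR_gt0 (x / 2); rewrite /w; nra.
have poly_ge : 1 <= (1 + x + 2 * x ^+ 2) * w ^+ 2.
  have : 0 <= x ^+ 2 * ((1 - x) * (5 - 2 * x)) by rewrite mulr_ge0 ?sqr_ge0 ?mulr_ge0 //; lra.
  rewrite /w; nra.
have -> : expR x = expR (x / 2) ^+ 2 by rewrite expr2 -expRD; congr expR; field.
move: exp_half poly_ge (expR_gt0 (x / 2)); set y := expR (x / 2); set c := _ + _ + _.
move=> yw_le1 cw_ge1 y_gt0.
have c_ge0 : 0 <= c by rewrite -(pmulr_lge0 _ (exprn_gt0 2 w_gt0)); lra.
have yw2_le1 : (y * w) ^+ 2 <= 1 by rewrite expr_le1 ?mulr_ge0 //; lra.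
have : y ^+ 2 <= y ^+ 2 * (c * w ^+ 2) by rewrite ler_peMr ?sqr_ge0.
rewrite mulrA mulrAC -exprMn; nra.
Qed.

Lemma sum_le_subpred (R : realType) (I : finType) (a b : pred I) (F : I -> R) :
  (forall i, a i -> b i) -> (forall i, 0 <= F i) ->
  \sum_(i | a i) F i <= \sum_(i | b i) F i.
Proof.
move=> ab F_ge0; rewrite big_mkcond [X in _ <= X]big_mkcond; apply: ler_sum => i _.
by case: ifP => [/ab ->|_] //; case: ifP.
Qed.

Lemma last_take_tnth (T : Type) n (xs : n.-tuple T) (i : 'I_n) x0 :
  last x0 (take i.+1 xs) = tnth xs i.
Proof. by rewrite (take_nth x0) ?size_tuple // last_rcons (tnth_nth x0). Qed.

Section Distribution.
Variables (R : realType) (S : finType) (P : S -> R).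
Hypotheses (P_ge0 : forall x, 0 <= P x) (P_sum1 : \sum_x P x = 1).

Lemma mean_le (f : S -> R) M : (forall x, f x <= M) -> \sum_x P x * f x <= M.
Proof.
move=> f_le; apply: le_trans (_ : \sum_x P x * M <= M).
  by apply: ler_sum => x _; apply: ler_wpM2l.
by rewrite -mulr_suml P_sum1 mul1r.
Qed.

Lemma mean_affine (f : S -> R) al be :
  \sum_x P x * (al * f x + be) = al * \sum_x P x * f x + be.
Proof.
under eq_bigr do rewrite mulrDr mulrCA.
by rewrite big_split /= -mulr_sumr -mulr_suml P_sum1 mul1r.
Qed.

Lemma mean_subr (f : S -> R) c : \sum_x P x * (f x - c) = \sum_x P x * f x - c.
Proof. by under eq_bigr do rewrite mulrBr; rewrite sumrB -mulr_suml P_sum1 mul1r. Qed.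

Lemma mean_subr_le (f : S -> R) c M :
  (forall x, f x - c <= M) -> \sum_x P x * f x - c <= M.
Proof. by move=> f_le; rewrite -mean_subr; apply: mean_le. Qed.

Lemma mean_subl_le (f : S -> R) c M :
  (forall x, c - f x <= M) -> c - \sum_x P x * f x <= M.
Proof.
move=> f_le; rewrite -opprB -mean_subr -sumrN.
by under eq_bigr do rewrite -mulrN opprB; apply: mean_le.
Qed.

(* Popoviciu's inequality, via the second moment about the midpoint of the range of f. *)
Lemma mean_var_le (f : S -> R) L : (forall x y, f x - f y <= L) ->
  \sum_x P x * (\sum_y P y * f y - f x) ^+ 2 <= L ^+ 2 / 4.
Proof.
move=> f_osc; have [x0 _ | S0] := pickP (@predT S); last first.
  by move: P_sum1; rewrite big_pred0 // => /eqP; rewrite eq_sym oner_eq0.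
set m := \sum_y P y * f y.
case: (@arg_maxP _ R S x0 predT f erefl) => xM _ f_le.
case: (@arg_minP _ R S x0 predT f erefl) => xm _ f_ge.
set c := (f xM + f xm) / 2.
have var_eq : \sum_x P x * (m - f x) ^+ 2 = \sum_x P x * (f x - c) ^+ 2 - (m - c) ^+ 2.
  have -> : \sum_x P x * (f x - c) ^+ 2
            = \sum_x P x * (2 * (m - c) * f x + (c ^+ 2 - m ^+ 2))
              + \sum_x P x * (m - f x) ^+ 2.
    by rewrite -big_split; apply: eq_bigr => x _ /=; ring.
  by rewrite mean_affine -/m; ring.
rewrite var_eq; apply: le_trans (_ : \sum_x P x * (f x - c) ^+ 2 <= _).
  by rewrite lerBlDr lerDl sqr_ge0.
apply: mean_le => x.
have fx_le : f x <= f xM := f_le x erefl.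
have fx_ge : f xm <= f x := f_ge x erefl.
have := f_osc xM xm => range_le.
have : 0 <= (L / 2 - (f x - c)) * (L / 2 + (f x - c)) by apply: mulr_ge0; rewrite /c; lra.
nra.
Qed.

Lemma hoeffding_mgf (f : S -> R) L lam : (forall x y, f x - f y <= L) ->
  0 <= lam -> lam * L <= 1 ->
  \sum_x P x * expR (lam * (\sum_y P y * f y - f x)) <= expR (lam ^+ 2 * L ^+ 2 / 2).
Proof.
move=> f_osc lam_ge0 lamL_le1; set m := \sum_y P y * f y.
have dev_le x : m - f x <= L by apply: mean_subr_le => y; apply: f_osc.
apply: le_trans (_ : \sum_x P x * (1 + lam * (m - f x) + 2 * (lam * (m - f x)) ^+ 2) <= _).
  apply: ler_sum => x _; apply/ler_wpM2l/expR_le_quad => //.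
  by apply: le_trans lamL_le1; apply: ler_wpM2l.
have -> : \sum_x P x * (1 + lam * (m - f x) + 2 * (lam * (m - f x)) ^+ 2)
          = \sum_x P x * (- lam * f x + (1 + lam * m))
            + 2 * lam ^+ 2 * \sum_x P x * (m - f x) ^+ 2.
  by rewrite [2 * _ * _]mulr_sumr -big_split; apply: eq_bigr => x _ /=; ring.
rewrite mean_affine -/m.
have := mean_var_le f_osc; rewrite -/m => var_le.
apply: le_trans (expR_ge1Dx _); have := sqr_ge0 lam; nra.
Qed.

End Distribution.

Section PathMass.
Variables (R : realType) (S : finType).

Definition path_mass n (h0 : seq S) (f : seq S -> S -> R) : R :=
  \sum_(xs : n.-tuple S) \prod_(i < n) f (h0 ++ take i xs) (tnth xs i).

Lemma path_mass0 h0 f : path_mass 0 h0 f = 1.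
Proof.
rewrite /path_mass (big_pred1 [tuple]) ?big_ord0 // => xs.
by apply/esym/eqP; apply: tuple0.
Qed.

Lemma path_massS n h0 f :
  path_mass n.+1 h0 f = \sum_x f h0 x * path_mass n (rcons h0 x) f.
Proof.
rewrite /path_mass (reindex (fun xt : S * n.-tuple S => [tuple of xt.1 :: xt.2])) /=; last first.
  exists (fun xs : n.+1.-tuple S => (thead xs, [tuple of behead xs])).
    by case=> x xs _ /=; congr pair; apply: val_inj.
  by move=> xs _; rewrite /= -tuple_eta.
rewrite -(pair_big predT predT (fun x (xs : n.-tuple S) =>
   \prod_(i < n.+1) f (h0 ++ take i (x :: xs)) (tnth [tuple of x :: xs] i))) /=.
apply: eq_bigr => x _; rewrite mulr_sumr; apply: eq_bigr => xs _.
rewrite big_ord_recl /= cats0 tnth0; congr (_ * _).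
by apply: eq_bigr => i _; rewrite tnthS -cat_rcons.
Qed.

Lemma path_mass_le_pow n h0 f B : (forall h x, 0 <= f h x) ->
  (forall h, \sum_x f h x <= B) -> path_mass n h0 f <= B ^+ n.
Proof.
move=> f_ge0 f_sum; elim: n h0 => [|n IHn] h0; first by rewrite path_mass0.
have B_ge0 : 0 <= B by apply: le_trans (f_sum h0); apply: sumr_ge0.
rewrite path_massS exprS.
apply: le_trans (_ : \sum_x f h0 x * B ^+ n <= _).
  by apply: ler_sum => x _; apply: ler_wpM2l.
by rewrite -mulr_suml ler_wpM2r ?exprn_ge0.
Qed.

Lemma path_mass_eq1 n h0 f : (forall h, \sum_x f h x = 1) -> path_mass n h0 f = 1.
Proof.
move=> f_sum; elim: n h0 => [|n IHn] h0; first exact: path_mass0.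
by rewrite path_massS; under eq_bigr do rewrite IHn mulr1.
Qed.

End PathMass.

Section Azuma.
Variables (R : realType) (S : finType).
Variables (P F : seq S -> S -> R) (L : R).
Hypotheses (P_ge0 : forall h x, 0 <= P h x) (P_sum1 : forall h, \sum_x P h x = 1).
Hypothesis F_osc : forall h x y, F h x - F h y <= L.

Definition path_prob n (xs : n.-tuple S) : R :=
  \prod_(i < n) P (take i xs) (tnth xs i).

Definition mart_sum n (xs : n.-tuple S) : R :=
  \sum_(i < n) (\sum_y P (take i xs) y * F (take i xs) y - F (take i xs) (tnth xs i)).

Lemma path_prob_ge0 n (xs : n.-tuple S) : 0 <= path_prob xs.
Proof. by apply: prodr_ge0 => i _. Qed.

Lemma sum_path_prob n : \sum_(xs : n.-tuple S) path_prob xs = 1.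
Proof. exact: (path_mass_eq1 n [::] P_sum1). Qed.

Lemma mart_sum_le n (xs : n.-tuple S) : mart_sum xs <= n%:R * L.
Proof.
apply: le_trans (_ : \sum_(i < n) L <= _); last by rewrite sumr_const card_ord mulr_natl.
by apply: ler_sum => i _; apply: mean_subr_le => // y; apply: F_osc.
Qed.

Lemma mart_tail_le n eps lam : 0 <= lam -> lam * L <= 1 ->
  \sum_(xs : n.-tuple S | eps < mart_sum xs) path_prob xs
    <= expR (- (lam * eps) + n%:R * (lam ^+ 2 * L ^+ 2 / 2)).
Proof.
move=> lam_ge0 lamL_le1.
pose g h x := P h x * expR (lam * (\sum_y P h y * F h y - F h x)).
have markov : \sum_(xs : n.-tuple S | eps < mart_sum xs) path_prob xs
              <= expR (- (lam * eps)) * path_mass n [::] g.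
  rewrite /path_mass mulr_sumr big_mkcond /=; apply: ler_sum => xs _.
  have -> : expR (- (lam * eps)) * \prod_(i < n) g ([::] ++ take i xs) (tnth xs i)
            = path_prob xs * expR (lam * (mart_sum xs - eps)).
    rewrite mulrBr expRD mulrA [RHS]mulrC; congr (_ * _).
    by rewrite /mart_sum mulr_sumr expR_sum -big_split.
  case: ifP => [tail|_]; last by rewrite mulr_ge0 ?path_prob_ge0 ?expR_ge0.
  rewrite ler_peMr ?path_prob_ge0 //; apply: le_trans (expR_ge1Dx _).
  by rewrite lerDl mulr_ge0 // subr_ge0 ltW.
apply: le_trans markov _; rewrite expRD ler_wpM2l ?expR_ge0 // expRM_natl.
apply: path_mass_le_pow => [h x|h]; first by rewrite mulr_ge0 ?expR_ge0.
exact: hoeffding_mgf.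
Qed.

Theorem azuma_tail n delta : 0 <= L -> 0 < delta <= 1 ->
  \sum_(xs : n.-tuple S | L * Num.sqrt (2 * n%:R * ln delta^-1) < mart_sum xs) path_prob xs
    <= delta.
Proof.
move=> L_ge0 /andP[delta_gt0 delta_le1].
set u := Num.sqrt _; set eps := L * u.
have K_ge0 : 0 <= ln delta^-1 by rewrite ln_ge0 // invf_ge1.
have u2 : u ^+ 2 = 2 * n%:R * ln delta^-1 by rewrite sqr_sqrtr // !mulr_ge0.
have [nL_le|eps_lt] := lerP (n%:R * L) eps.
  rewrite big1 ?ltW // => xs tail.
  by have := mart_sum_le xs; lra.
have eps_ge0 : 0 <= eps by rewrite mulr_ge0 ?sqrtr_ge0.
have nL_gt0 : 0 < n%:R * L by apply: le_lt_trans eps_lt.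
have n_gt0 : 0 < n%:R :> R by have := ler0n R n; nra.
have L_gt0 : 0 < L by nra.
have u_lt_n : u < n%:R by rewrite -(ltr_pM2r L_gt0) mulrC; exact: eps_lt.
set lam := u / (n%:R * L).
apply: le_trans (@mart_tail_le n eps lam _ _) _.
- by rewrite divr_ge0 ?sqrtr_ge0 ?ltW.
- rewrite /lam mulrAC -mulf_div divff ?gt_eqF // mulr1.
  by rewrite ler_pdivrMr // mul1r ltW.
have -> : - (lam * eps) + n%:R * (lam ^+ 2 * L ^+ 2 / 2) = - (u ^+ 2 / (2 * n%:R)).
  by rewrite /lam /eps; field; rewrite !gt_eqF.
rewrite u2 mulrAC divff ?mul1r ?gt_eqF ?mulr_gt0 // lnV ?posrE ?opprK ?lnK //.
Qed.

End Azuma.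

Lemma sub_le_sp (R : realType) (S : finType) (v : S -> R) s s' : v s - v s' <= sp v.
Proof.
rewrite /sp (bigD1 s) //= le_max; apply/orP; left.
by rewrite (bigD1 s') //= le_max lexx.
Qed.

Section MDP.
Variables (R : realType) (S A : finType) (r : S -> A -> R) (p : S -> A -> S -> R).
Hypothesis p_kernel : is_kernel p.

Lemma mean_sub_mean_le s a s' a' (f : S -> R) M : (forall x y, f x - f y <= M) ->
  \sum_x p s a x * f x - \sum_x p s' a' x * f x <= M.
Proof.
move=> f_osc; have [p_ge0 p_sum1] := p_kernel s a; have [p_ge0' p_sum1'] := p_kernel s' a'.
by apply: mean_subr_le => // x; apply: mean_subl_le => // y.
Qed.

(* At a maximiser of e := V - v the two optimality equations give
   (1 - g) e <= J - (1 - g) E[v], and at a minimiser the reverse inequality, with the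
   one-step means E[v] taken under different actions; hence osc e <= sp v. *)
Lemma disc_value_sub_le J q v g Q V :
  avg_opt r p J q v -> disc_opt r p g Q V -> 0 <= g < 1 ->
  forall s s', V s - V s' <= 2 * sp v.
Proof.
move=> [q_max avg_eq] [Q_max disc_eq] /andP[g_ge0 g_lt1] s s'.
pose e x := V x - v x.
have gap x b : Q x b - q x b
               = g * \sum_y p x b y * e y - (1 - g) * \sum_y p x b y * v y + J.
  rewrite -(addKr J (q x b)) avg_eq disc_eq /e /=.
  under [X in _ = g * X - _ + _]eq_bigr do rewrite mulrBr.
  rewrite sumrB; ring.
case: (@arg_maxP _ R S s predT e erefl) => sM _ e_le.
case: (@arg_minP _ R S s predT e erefl) => sm _ e_ge.
have [[_ [a Va]] [q_le _]] := (Q_max sM, q_max sM).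
have [[Q_le _] [_ [b vb]]] := (Q_max sm, q_max sm).
have [p_ge0 p_sum1] := p_kernel sM a; have [p_ge0' p_sum1'] := p_kernel sm b.
have eM_le : (1 - g) * e sM <= J - (1 - g) * \sum_y p sM a y * v y.
  have : \sum_y p sM a y * e y <= e sM by apply: mean_le => // y; apply: e_le.
  have := gap sM a; have := q_le a; rewrite /e -Va; nra.
have em_ge : J - (1 - g) * \sum_y p sm b y * v y <= (1 - g) * e sm.
  have : e sm - \sum_y p sm b y * e y <= 0.
    by apply: mean_subl_le => // y; rewrite subr_le0; apply: e_ge.
  have := gap sm b; have := Q_le b; rewrite /e -vb; nra.
have : (1 - g) * (e sM - e sm) <= (1 - g) * sp v.
  have := mean_sub_mean_le sm b sM a (@sub_le_sp R S v).
  move/(ler_wpM2l (_ : 0 <= 1 - g)); lra.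
rewrite ler_pM2l ?subr_gt0 // => e_osc.
have es_le : e s <= e sM := e_le s erefl.
have es'_ge : e sm <= e s' := e_ge s' erefl.
have := sub_le_sp v s s'; rewrite /e in es_le es'_ge e_osc *; lra.
Qed.

Lemma disc_residual_sum g Q V (c : nat -> S) (a : nat -> A) n :
  disc_opt r p g Q V ->
  \sum_(i < n) (Q (c i) (a i) - g * V (c i) - r (c i) (a i))
  = g * \sum_(i < n) (\sum_y p (c i) (a i) y * V y - V (c i.+1))
    + g * (V (c n) - V (c 0%N)).
Proof.
move=> [_ disc_eq].
have step i : Q (c i) (a i) - g * V (c i) - r (c i) (a i)
              = g * (\sum_y p (c i) (a i) y * V y - V (c i.+1)) + g * (V (c i.+1) - V (c i)).
  by rewrite disc_eq; ring.
rewrite (eq_bigr _ (fun (i : 'I_n) _ => step i)) big_split /= -!mulr_sumr.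
by rewrite -(big_mkord xpredT (fun i => V (c i.+1) - V (c i))) telescope_sumr.
Qed.

End MDP.

Section QLearning.
Variables (R : realType) (S A : finType) (r : S -> A -> R) (p : S -> A -> S -> R).
Variables (H delta : R) (T : nat) (spv : R) (sel : (A -> R) -> A) (s1 : S).
Hypothesis p_kernel : is_kernel p.

Definition ql_action (h : seq S) : A :=
  act sel (qrun r H delta T spv sel (qinit A H s1) h).

Definition ql_kernel (h : seq S) : S -> R := p (last s1 h) (ql_action h).

Lemma cur_qrun (st : qstate R S A) (l : seq S) :
  cur (qrun r H delta T spv sel st l) = last (cur st) l.
Proof. by elim: l st => [|x l IHl] st //=; rewrite IHl. Qed.

Lemma cur_state_at (xs : seq S) i :
  cur (state_at r H delta T spv sel s1 xs i) = last s1 (take i xs).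
Proof. exact: cur_qrun. Qed.

Lemma ql_kernel_ge0 h x : 0 <= ql_kernel h x.
Proof. by have [kernel_ge0 _] := p_kernel (last s1 h) (ql_action h); apply: kernel_ge0. Qed.

Lemma ql_kernel_sum1 h : \sum_x ql_kernel h x = 1.
Proof. by have [_ kernel_sum1] := p_kernel (last s1 h) (ql_action h); apply: kernel_sum1. Qed.

Lemma traj_probE (xs : T.-tuple S) :
  traj_prob r p H delta T spv sel s1 xs = path_prob ql_kernel xs.
Proof. by apply: eq_bigr => i _; rewrite /= cur_state_at. Qed.

Lemma ql_residual_sum g Q V (xs : T.-tuple S) : disc_opt r p g Q V ->
  \sum_(i < T)
     (let st := state_at r H delta T spv sel s1 xs i in
      Q (cur st) (act sel st) - g * V (cur st) - r (cur st) (act sel st))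
  = g * mart_sum ql_kernel (fun _ => V) xs + g * (V (last s1 xs) - V s1).
Proof.
move=> disc; under eq_bigr do rewrite /= cur_state_at.
rewrite (disc_residual_sum (fun i => last s1 (take i xs)) (fun i => ql_action (take i xs)) _ disc).
rewrite take0 take_oversize ?size_tuple //; congr (_ * _ + _).
by apply: eq_bigr => i _; rewrite last_take_tnth.
Qed.

End QLearning.

Theorem lemma3 (R : realType) (S A : finType)
  (r : S -> A -> R) (p : S -> A -> S -> R)
  (Jstar : R) (qstar : S -> A -> R) (vstar : S -> R)
  (Qstar : S -> A -> R) (Vstar : S -> R)
  (T : nat) (H delta : R) (sel : (A -> R) -> A) (s1 : S) :
  is_kernel p ->
  (forall s a, 0 <= r s a <= 1) ->
  weakly_communicating p ->
  avg_opt r p Jstar qstar vstar ->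
  0 <= Jstar <= 1 ->
  2 <= H ->
  0 < delta < 1 ->
  (forall f a, f a <= f (sel f)) ->
  disc_opt r p (gam H) Qstar Vstar ->
  \sum_(xs : T.-tuple S |
          \sum_(i < T)
             (let st := state_at r H delta T (sp vstar) sel s1 xs i in
              Qstar (cur st) (act sel st) - gam H * Vstar (cur st)
              - r (cur st) (act sel st))
          <= 2 * sp vstar * Num.sqrt (2 * T%:R * ln (delta^-1)) + 2 * sp vstar)
     traj_prob r p H delta T (sp vstar) sel s1 xs
  >= 1 - delta.
Proof.
move=> p_kernel _ _ avg _ H_ge2 /andP[delta_gt0 delta_lt1] _ disc.
have gam01 : 0 <= gam H < 1.
  have : 0 < H^-1 <= 1 by rewrite invr_gt0 invf_le1; lra.
  by rewrite /gam; lra.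
have V_osc := disc_value_sub_le p_kernel avg disc gam01.
have L_ge0 : 0 <= 2 * sp vstar by have := sub_le_sp vstar s1 s1; rewrite subrr; lra.
set eps := 2 * sp vstar * _.
have eps_ge0 : 0 <= eps by rewrite mulr_ge0 ?sqrtr_ge0.
set P := ql_kernel r p H delta T (sp vstar) sel s1.
have P_ge0 := ql_kernel_ge0 r H delta T (sp vstar) sel s1 p_kernel.
have P_sum1 := ql_kernel_sum1 r H delta T (sp vstar) sel s1 p_kernel.
pose M := mart_sum P (fun _ => Vstar) (n := T).
have tail : \sum_(xs : T.-tuple S | eps < M xs) path_prob P xs <= delta.
  by apply: (azuma_tail P_ge0 P_sum1 (fun _ : seq S => V_osc)) => //; lra.
have good (xs : T.-tuple S) : ~~ (eps < M xs) ->
    gam H * M xs + gam H * (Vstar (last s1 xs) - Vstar s1) <= eps + 2 * sp vstar.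
  by rewrite -leNgt => M_le; have := V_osc (last s1 xs) s1; nra.
under eq_bigl => xs do rewrite (ql_residual_sum _ _ _ _ _ _ disc).
under eq_bigr => xs _ do rewrite traj_probE.
apply: le_trans (sum_le_subpred good (path_prob_ge0 P_ge0 (n := T))).
by rewrite -(sum_path_prob P_sum1 T) (bigID (fun xs => eps < M xs)) /=; lra.
Qed.
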